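(* Let $W_1$ and $W_2$ be arbitrary quantum walks on $\ell^2(\mathbb{Z})\otimes\mathbb{C}^2$, and let $W_1\oplus W_2$ be their direct sum on $\mathcal H=\mathcal H_e\oplus\mathcal H_o$ with respect to even and odd lattice sites (as described below). Then $$v(W_1\oplus W_2)=2\max\{v(W_1),v(W_2)\}.$$
   Context: $\mathcal H=\ell^2(\mathbb{Z})\otimes\mathbb{C}^2$ with basis $\delta_k^\pm=\delta_k\otimes e_\pm$. State-dependent shifts: $S_\pm=T^{\pm1}\otimes P_\pm+\mathbb{1}\otimes P_\mp$, where $T\delta_k=\delta_{k+1}$ and $P_\pm$ are the projections onto $e_+=(1,0)^\top$, $e_-=(0,1)^\top$. A coin operator acts as $C(\delta_k\otimes v)=\delta_k\otimes C(k)v$ with $C(k)$ unitary $2\times2$ matrices. A quantum walk is a finite product of shift operators $S_\pm$ and coin operators. $Q\delta_k^\pm=k\delta_k^\pm$ is the position operator. For a walk $W$ and normalized $\psi\in\mathrm{dom}(Q)$, $v(W,\psi)=\limsup_{t\to\infty}\frac1t\|QW^t\psi\|$, and $v(W)=\sup\{v(W,\psi):\psi\in\mathrm{dom}(Q),\|\psi\|=1\}$. The direct sum is taken with respect to $\mathcal H_e=\ell^2(2\mathbb{Z})\otimes\mathbb{C}^2$ and $\mathcal H_o=\ell^2(2\mathbb{Z}+1)\otimes\mathbb{C}^2$, each identified with $\ell^2(\mathbb{Z})\otimes\mathbb{C}^2$ via $\delta_{2k}^\pm\mapsto\delta_k^\pm$ and $\delta_{2k+1}^\pm\mapsto\delta_k^\pm$;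 $W_1$ acts on $\mathcal H_e$ and $W_2$ on $\mathcal H_o$. *)

From HB Require Import structures.
From mathcomp Require Import all_boot all_order all_algebra.
From mathcomp Require Import spectral.
From mathcomp.real_closed Require Import complex.
From mathcomp Require Import all_classical all_reals.
From mathcomp Require Import ereal topology normedtype sequences esum.

Set Implicit Arguments.
Unset Strict Implicit.
Unset Printing Implicit Defensive.
Import Order.TTheory GRing.Theory Num.Theory.
Local Open Scope ring_scope.
Local Open Scope classical_set_scope.

(* States: functions Z -> C^2, psi k = column vector (psi(delta_k^+), psi(delta_k^-)).
   Index 0 of the column = e_+, index 1 = e_-. *)
Section QW.
Variable R : realType.
Local Notation C := (R[i]).

Definition state := int -> 'cV[C]_2.

Definition csq (z : C) : R := complex.Re z ^+ 2 + complex.Im z ^+ 2.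

Definition vsq (v : 'cV[C]_2) : R := csq (v 0 0) + csq (v 1 0).

Definition norm2 (psi : state) : \bar R :=
  \esum_(k in [set: int]) (vsq (psi k))%:E.

Definition normQ2 (psi : state) : \bar R :=
  \esum_(k in [set: int]) ((k%:~R) ^+ 2 * vsq (psi k))%:E.

Definition esqrt (x : \bar R) : \bar R :=
  match x with EFin r => (Num.sqrt r)%:E | _ => +oo%E end.

Definition in_domQ (psi : state) : Prop :=
  (norm2 psi < +oo)%E /\ (normQ2 psi < +oo)%E.

(* Generators of quantum walks: state-dependent shifts S_+ (true), S_- (false),
   and coin operators given by a field of 2x2 matrices. *)
Inductive qw_gen := QShift of bool | QCoin of (int -> 'M[C]_2).

(* S_+ = T (x) P_+ + 1 (x) P_-,  S_- = T^{-1} (x) P_- + 1 (x) P_+ ,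
   T delta_k = delta_{k+1}, so (T psi)(k) = psi(k-1). *)
Definition shift (b : bool) (psi : state) : state := fun k =>
  \col_i (if b then (if i == 0 then psi (k - 1) i 0 else psi k i 0)
               else (if i == 0 then psi k i 0 else psi (k + 1) i 0)).

Definition coin (c : int -> 'M[C]_2) (psi : state) : state :=
  fun k => c k *m psi k.

Definition gen_act (g : qw_gen) : state -> state :=
  match g with QShift b => shift b | QCoin c => coin c end.

Definition gen_ok (g : qw_gen) : Prop :=
  match g with QShift _ => True | QCoin c => forall k, c k \is unitarymx end.

Definition is_walk (w : seq qw_gen) : Prop := forall i, (i < size w)%N -> gen_ok (nth (QShift true) w i).

Definition walk_act (w : seq qw_gen) : state -> state :=
  foldr (fun g f => gen_act g \o f) id w.

Definition vel_at (W : state -> state) (psi : state) : \bar R :=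
  limn_esup (fun t : nat => ((t%:R)^-1)%:E * esqrt (normQ2 (iter t W psi)))%E.

Definition vel (W : state -> state) : \bar R :=
  ereal_sup [set vel_at W psi | psi in [set psi | in_domQ psi /\ norm2 psi = 1%E]].

(* Direct sum w.r.t. even and odd sites, with delta_{2k} |-> delta_k on H_e and
   delta_{2k+1} |-> delta_k on H_o. *)
Definition dsum (W1 W2 : state -> state) : state -> state := fun psi n =>
  if (n %% 2 == 0)%Z then W1 (fun k => psi (2 * k)%R) (n %/ 2)%Z
  else W2 (fun k => psi (2 * k + 1)%R) (n %/ 2)%Z.

End QW.

(* On the even sublattice the position operator acts as 2Q and on the odd one as
   2Q + 1, so ||Q (W1 (+) W2)^t psi||^2 = 4 ||Q W1^t psi_e||^2 + ||(2Q + 1) W2^t psi_o||^2.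
   Velocities are square roots of quadratic growth rates,
   v(W, psi)^2 = limsup_t ||Q W^t psi||^2 / t^2, and the offset 1 does not change
   such a rate: (y + z)^2 <= (1 + d) y^2 + (1 + 1/d) z^2 trades it for a factor
   1 + d, which may be taken close to 1, and a multiple of the conserved norm,
   which is bounded.  Splitting a normalized psi into even and odd parts of weights
   a + b = 1, homogeneity of the walks bounds the rate of W1 (+) W2 by
   4 (a + b) max(v(W1), v(W2))^2; conversely, states supported on a single
   sublattice give v(W_i) <= v(W1 (+) W2) / 2. *)

From Pilot Require Import Defs.
From HB Require Import structures.
From mathcomp Require Import all_boot all_order all_algebra.
From mathcomp Require Import spectral.
From mathcomp.real_closed Require Import complex.
From mathcomp Require Import all_classical all_reals.
From mathcomp Require Import ereal topology normedtype sequences esum.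
From mathcomp Require Import lra ring zify.
Import Order.TTheory GRing.Theory Num.Theory.

Set Implicit Arguments.
Unset Strict Implicit.
Unset Printing Implicit Defensive.

Local Open Scope ring_scope.
Local Open Scope classical_set_scope.

Section esum_facts.
Variable R : realType.
Local Open Scope ereal_scope.

Lemma ge0_esumZl (T : choiceType) (S : set T) (a : T -> \bar R) (r : R) :
  (0 <= r)%R -> (forall x, 0 <= a x) ->
  \esum_(i in S) (r%:E * a i) = r%:E * \esum_(i in S) a i.
Proof.
move=> r0 a0; rewrite /esum -ereal_supZl //; last first.
  by apply/set0P; exists 0; exists set0; [exact: fsets_set0|rewrite fsbig_set0].
congr ereal_sup; apply/seteqP; split => x /=.
  by move=> [A hA <-]; exists (\sum_(i \in A) a i); [exists A|rewrite ge0_mule_fsumr].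
by move=> [y [A hA <-] <-]; exists A => //; rewrite ge0_mule_fsumr.
Qed.

Lemma esum_ge_term (T : choiceType) (S : set T) (a : T -> \bar R) (x : T) :
  S x -> a x <= \esum_(i in S) a i.
Proof.
move=> Sx; apply: esum_ge; exists [set x]; last by rewrite fsbig_set1.
by split; [exact: finite_set1|move=> y ->].
Qed.

Lemma esumT_set1 (T : choiceType) (a : T -> \bar R) (x : T) :
  (forall i, 0 <= a i) -> (forall i, i <> x -> a i = 0) ->
  \esum_(i in [set: T]) a i = a x.
Proof.
move=> a0 ax; rewrite (esumID [set x]) // setTI esum_set1 // esum1 ?adde0 //.
by move=> i [_ /= /ax].
Qed.

Lemma esum_int_shift (a : int -> \bar R) (d : int) :
  \esum_(k in [set: int]) a k = \esum_(k in [set: int]) a (k + d)%R.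
Proof.
apply: (reindex_esum [set: int] [set: int] (fun k => k + d)%R a); split => //.
- by move=> x y _ _ /= /addIr.
- by move=> y _; exists (y - d)%R; rewrite //= subrK.
Qed.

Lemma esum_even_odd (a : int -> \bar R) : (forall k, 0 <= a k) ->
  \esum_(k in [set: int]) a k =
  \esum_(k in [set: int]) a (2 * k)%R + \esum_(k in [set: int]) a (2 * k + 1)%R.
Proof.
move=> a0; rewrite (esumID [set n : int | (n %% 2 == 0)%Z]) // !setTI.
have -> : [set n : int | (n %% 2 == 0)%Z] = (fun k => 2 * k)%R @` [set: int].
  apply/seteqP; split => n /=; last by move=> [k _ <-]; apply/eqP; lia.
  by move=> /eqP n_even; exists (n %/ 2)%Z => //; lia.
have -> : ~` ((fun k => 2 * k)%R @` [set: int]) = (fun k => 2 * k + 1)%R @` [set: int].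
  apply/seteqP; split => n /=; last by move=> [k _ <-] [j _]; lia.
  move=> n_odd; exists (n %/ 2)%Z => //.
  have : (n %% 2 != 0)%Z by apply/eqP => ?; apply: n_odd; exists (n %/ 2)%Z => //; lia.
  lia.
by rewrite !esum_image // => x y _ _ /=; lia.
Qed.

End esum_facts.

Section ereal_facts.
Variable R : realType.
Local Open Scope ereal_scope.

Lemma lee_mul4 (x : \bar R) : 0 <= x -> x <= 4%:E * x.
Proof. by move=> x0; rewrite lee_pemull // lee_fin ler1n. Qed.

Lemma eq_twice_max (u a b : \bar R) : 0 <= a -> 0 <= u ->
  (forall m : R, (0 <= m)%R -> a <= m%:E -> b <= m%:E -> u <= (2 * m)%:E) ->
  (forall x : R, (0 <= x)%R -> u <= x%:E -> a <= (x / 2)%:E /\ b <= (x / 2)%:E) ->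
  u = 2%:E * Order.max a b.
Proof.
move=> a0 u0 ub lb; apply/le_anti/andP; split.
- have aM : a <= Order.max a b by rewrite le_max lexx.
  have bM : b <= Order.max a b by rewrite le_max lexx orbT.
  move: aM bM; case: (Order.max a b) => [m aM bM| _ _|aM _].
  + by rewrite -EFinM ub // -lee_fin (le_trans a0).
  + by rewrite gt0_muley ?lte_fin // leey.
  + by move: (le_trans a0 aM).
- move: u0 ub lb; case: u => [x x0 _ lb| _ _ _|//]; last exact: leey.
  rewrite lee_fin in x0; have [ax bx] := lb x x0 (lexx _).
  have : Order.max a b <= (x / 2)%:E by rewrite ge_max ax bx.
  move=> /(@lee_wpmul2l _ 2%:E); rewrite -EFinM mulrC divfK // lee_fin; apply.
  by rewrite ler0n.
Qed.

End ereal_facts.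

Section complex_norms.
Variable R : realType.
Local Notation C := R[i].
Local Open Scope sesquilinear_scope.

Lemma csq_ge0 (z : C) : 0 <= csq z.
Proof. by rewrite addr_ge0 ?sqr_ge0. Qed.

Lemma csq_eq0 (z : C) : (csq z == 0) = (z == 0).
Proof. by case: z => a b; rewrite /csq paddr_eq0 ?sqr_ge0 // !sqrf_eq0 eq_complex. Qed.

Lemma csqM (a z : C) : csq (a * z) = csq a * csq z.
Proof. by case: a => x y; case: z => u v; rewrite /csq /=; ring. Qed.

Lemma csq_real (r : R) : csq r%:C%C = r ^+ 2.
Proof. by rewrite /csq /= expr0n addr0. Qed.

Lemma csqE (z : C) : (csq z)%:C%C = z^* * z.
Proof.
case: z => a b; apply/eqP; rewrite eq_complex /=; simpc.
by rewrite [a * b]mulrC subrr !eqxx.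
Qed.

Lemma vsq_ge0 (v : 'cV[C]_2) : 0 <= vsq v.
Proof. by rewrite addr_ge0 ?csq_ge0. Qed.

Lemma vsq_eq0 (v : 'cV[C]_2) : (vsq v == 0) = (v == 0).
Proof.
rewrite /vsq paddr_eq0 ?csq_ge0 // !csq_eq0; apply/andP/eqP => [[/eqP v0 /eqP v1]|->].
  apply/matrixP => i j; rewrite (ord1 j) mxE.
  by case: i => [[|[|//]] i2]; [rewrite -v0|rewrite -v1]; congr (v _ _); apply/val_inj.
by rewrite !mxE.
Qed.

Lemma vsq0 : vsq (0 : 'cV[C]_2) = 0.
Proof. by apply/eqP; rewrite vsq_eq0. Qed.

Lemma vsqZ (a : C) (v : 'cV[C]_2) : vsq (a *: v) = csq a * vsq v.
Proof. by rewrite /vsq !mxE !csqM -mulrDr. Qed.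

Lemma vsqE (v : 'cV[C]_2) : (vsq v)%:C%C = (v^t* *m v) 0 0.
Proof.
rewrite mxE big_ord_recr big_ord1 /= !mxE /vsq rmorphD /= !csqE.
have -> : widen_ord (leqnSn 1) ord0 = 0 :> 'I_2 by apply/val_inj.
by have -> : ord_max = 1 :> 'I_2 by apply/val_inj.
Qed.

Lemma vsq_unitary (U : 'M[C]_2) (v : 'cV[C]_2) :
  U \is unitarymx -> vsq (U *m v) = vsq v.
Proof.
move=> U_unitary; apply: (@complexI R); rewrite !vsqE trmx_mul map_mxM.
rewrite mulmxA -[_ *m U^t* *m U]mulmxA.
have -> : U ^t* *m U = 1%:M by rewrite -[LHS]mul1mx mulmxA mulmxKtV.
by rewrite mulmx1.
Qed.

End complex_norms.

Section states.
Variable R : realType.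
Local Notation C := R[i].
Local Notation state := (state R).
Local Open Scope ereal_scope.

Definition moment2 (x : int -> R) (psi : state) : \bar R :=
  \esum_(k in [set: int]) (x k ^+ 2 * vsq (psi k))%:E.

Lemma normQ2E (psi : state) : normQ2 psi = moment2 (fun k => k%:~R) psi.
Proof. by []. Qed.

Lemma norm2_ge0 (psi : state) : 0 <= norm2 psi.
Proof. by apply: esum_ge0 => k _; rewrite lee_fin vsq_ge0. Qed.

Lemma moment2_ge0 x (psi : state) : 0 <= moment2 x psi.
Proof. by apply: esum_ge0 => k _; rewrite lee_fin mulr_ge0 ?sqr_ge0 ?vsq_ge0. Qed.

Lemma norm2_0 : norm2 (0%R : state) = 0.
Proof. by rewrite /norm2 esum1 // => k _; rewrite vsq0. Qed.

Lemma moment2_0 x : moment2 x (0%R : state) = 0.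
Proof. by rewrite /moment2 esum1 // => k _; rewrite vsq0 mulr0. Qed.

Lemma norm2_eq0 (psi : state) : norm2 psi = 0 -> psi = 0%R.
Proof.
move=> psi0; apply/funext => k; apply/eqP; rewrite -vsq_eq0 eq_le vsq_ge0 andbT.
by rewrite -lee_fin -[0%:E]psi0; apply: (esum_ge_term (fun j => (vsq (psi j))%:E)).
Qed.

Lemma norm2Z (a : C) (psi : state) : norm2 (a *: psi) = (csq a)%:E * norm2 psi.
Proof.
rewrite /norm2 -ge0_esumZl ?csq_ge0 // => [|k]; last by rewrite lee_fin vsq_ge0.
by apply: eq_esum => k _; rewrite vsqZ.
Qed.

Lemma moment2Z x (a : C) (psi : state) :
  moment2 x (a *: psi) = (csq a)%:E * moment2 x psi.
Proof.
rewrite /moment2 -ge0_esumZl ?csq_ge0 // => [|k]; last first.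
  by rewrite lee_fin mulr_ge0 ?sqr_ge0 ?vsq_ge0.
by apply: eq_esum => k _; rewrite vsqZ -EFinM mulrCA.
Qed.

Lemma moment2M (c : R) x (psi : state) :
  moment2 (fun k => c * x k)%R psi = (c ^+ 2)%:E * moment2 x psi.
Proof.
rewrite /moment2 -ge0_esumZl ?sqr_ge0 // => [|k]; last first.
  by rewrite lee_fin mulr_ge0 ?sqr_ge0 ?vsq_ge0.
by apply: eq_esum => k _; rewrite -EFinM exprMn -mulrA.
Qed.

Lemma moment2_double (psi : state) :
  moment2 (fun k => 2 * k%:~R)%R psi = 4%:E * normQ2 psi.
Proof. by rewrite moment2M expr2 -natrM. Qed.

Lemma moment2_le (x y : int -> R) (a b : R) (psi : state) :
  (0 <= a)%R -> (0 <= b)%R -> (forall k, x k ^+ 2 <= a * y k ^+ 2 + b)%R ->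
  moment2 x psi <= a%:E * moment2 y psi + b%:E * norm2 psi.
Proof.
move=> a0 b0 xy; rewrite /moment2 /norm2.
have m0 (z : int -> R) k : 0 <= (z k ^+ 2 * vsq (psi k))%:E.
  by rewrite lee_fin mulr_ge0 ?sqr_ge0 ?vsq_ge0.
have v0 k : 0 <= (vsq (psi k))%:E by rewrite lee_fin vsq_ge0.
rewrite -(ge0_esumZl _ a0 (m0 y)) -(ge0_esumZl _ b0 v0) -esumD => [|k _|k _]; first last.
- by apply: mule_ge0; [rewrite lee_fin|exact: v0].
- by apply: mule_ge0; [rewrite lee_fin|exact: m0].
apply: le_esum => k _; rewrite -!EFinM -EFinD lee_fin mulrA -mulrDl.
by rewrite ler_wpM2r ?vsq_ge0.
Qed.

(* Plain [shift] would be the translation of [normedtype]. *)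
Lemma norm2_shift b (psi : state) : norm2 (Defs.shift b psi) = norm2 psi.
Proof.
have csq0 (z : C) : 0 <= (csq z)%:E by rewrite lee_fin csq_ge0.
rewrite /norm2 /vsq /Defs.shift; case: b; under eq_esum do rewrite !mxE /= EFinD;
  under [RHS]eq_esum do rewrite EFinD; rewrite !esumD //.
  by rewrite [in LHS](esum_int_shift _ 1); under eq_esum do rewrite addrK.
by rewrite [in RHS](esum_int_shift (fun k => (csq (psi k 1 0))%:E) 1).
Qed.

Lemma norm2_coin (c : int -> 'M[C]_2) (psi : state) :
  (forall k, c k \is unitarymx) -> norm2 (coin c psi) = norm2 psi.
Proof. by move=> c_unitary; apply: eq_esum => k _; rewrite /coin vsq_unitary. Qed.

Lemma norm2_walk_act w (psi : state) : is_walk w -> norm2 (walk_act w psi) = norm2 psi.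
Proof.
elim: w => [//|[b|c] w IH] w_walk /=.
  by rewrite norm2_shift IH // => i; apply: (w_walk i.+1).
by rewrite norm2_coin ?IH // => [i|]; [apply: (w_walk i.+1)|apply: (w_walk 0%N)].
Qed.

Lemma walk_actZ w (a : C) (psi : state) : walk_act w (a *: psi) = a *: walk_act w psi.
Proof.
elim: w => [//|[b|c] w IH] /=; rewrite IH; apply/funext => k.
  by apply/matrixP => i j; rewrite /Defs.shift !mxE; case: b; case: (i == 0%R).
by rewrite /coin /= -scalemxAr.
Qed.

End states.

Section quadratic_growth.
Variable R : realType.
Local Open Scope ereal_scope.

(* [quad_growth q s] says [limsup_t q t / t^2 <= s], without dividing by [t^2]. *)
Definition quad_growth (q : nat -> \bar R) (s : R) :=
  forall e : R, (0 < e)%R -> \forall t \near \oo, q t <= ((s + e) * t%:R ^+ 2)%:E.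

Lemma limn_esup_leP (u : nat -> \bar R) (c : R) :
  limn_esup u <= c%:E <->
  (forall e : R, (0 < e)%R -> \forall t \near \oo, u t <= (c + e)%:E).
Proof.
rewrite /limn_esup limf_esupE; split => [uc e e0|uc].
  have /ereal_inf_lt[_ [V oV <-] Vc] : ereal_inf [set ereal_sup (u @` V) | V in \oo] < (c + e)%:E.
    by apply: le_lt_trans uc _; rewrite lte_fin ltrDl.
  by apply: filterS oV => t Vt; apply: le_trans (ltW Vc); apply: ereal_sup_ubound; exists t.
apply/lee_addgt0Pr => e e0.
apply: (@le_trans _ _ (ereal_sup (u @` [set t | u t <= (c + e)%:E]))).
  by apply: ereal_inf_lbound; exists [set t | u t <= (c + e)%:E] => //; exact: uc.
by apply: ge_ereal_sup => _ [t ut <-]; rewrite -EFinD.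
Qed.

Lemma esqrt_div_leP (q : \bar R) (t : nat) (d : R) :
  (0 < t)%N -> (0 <= d)%R -> 0 <= q ->
  (t%:R^-1)%:E * esqrt q <= d%:E <-> q <= ((d * t%:R) ^+ 2)%:E.
Proof.
move=> t0 d0; case: q => [r| |] //= r0; last first.
  by rewrite gt0_muley ?lte_fin ?invr_gt0 ?ltr0n.
have t0' : (0 < t%:R :> R)%R by rewrite ltr0n.
rewrite lee_fin in r0; rewrite -EFinM !lee_fin mulrC ler_pdivrMr //.
by rewrite -(@ler_sqrt _ r) ?sqr_ge0 // sqrtr_sqr ger0_norm // mulr_ge0 // ltW.
Qed.

Lemma limn_esup_esqrt_leP (q : nat -> \bar R) (c : R) :
  (forall t, 0 <= q t) -> (0 <= c)%R ->
  limn_esup (fun t => (t%:R^-1)%:E * esqrt (q t)) <= c%:E <-> quad_growth q (c ^+ 2).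
Proof.
move=> q0 c0; rewrite limn_esup_leP; split => qc e e0.
- (* [(c + e')^2 <= c^2 + e] for this [e'] *)
  pose e' := (e / (2 * c + 1 + e))%R.
  have D0 : (0 < 2 * c + 1 + e)%R by lra.
  have ee' : (e' * (2 * c + 1 + e) = e)%R by rewrite /e' mulfVK // gt_eqF.
  have e'0 : (0 < e')%R by rewrite /e' divr_gt0.
  move: (qc e' e'0) (nbhs_infty_gt 0); apply: filterS2 => t qt t0.
  apply: le_trans ((esqrt_div_leP t0 (addr_ge0 c0 (ltW e'0)) (q0 t)).1 qt) _.
  by rewrite lee_fin exprMn ler_wpM2r ?sqr_ge0 //; nra.
- move: (qc (e ^+ 2)%R (exprn_gt0 2 e0)) (nbhs_infty_gt 0); apply: filterS2 => t qt t0.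
  apply/(esqrt_div_leP t0 _ (q0 t)); first by lra.
  by apply: le_trans qt _; rewrite lee_fin exprMn ler_wpM2r ?sqr_ge0 //; nra.
Qed.

Lemma quad_growth_le (q q' : nat -> \bar R) s :
  (forall t, q t <= q' t) -> quad_growth q' s -> quad_growth q s.
Proof. by move=> qq' q's e e0; apply: filterS (q's e e0) => t; apply: le_trans. Qed.

Lemma quad_growthW q (s s' : R) : (s <= s')%R -> quad_growth q s -> quad_growth q s'.
Proof.
move=> ss' qs e e0; apply: filterS (qs e e0) => t /le_trans; apply.
by rewrite lee_fin ler_wpM2r ?sqr_ge0 // lerD2r.
Qed.

Lemma quad_growth_lim q s :
  (forall e : R, (0 < e)%R -> quad_growth q (s + e)) -> quad_growth q s.
Proof.
move=> qs e e0; have e2 : (0 < e / 2)%R by rewrite divr_gt0.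
by apply: filterS (qs _ e2 _ e2) => t; rewrite -addrA -splitr.
Qed.

Lemma quad_growthD q1 q2 s1 s2 :
  quad_growth q1 s1 -> quad_growth q2 s2 ->
  quad_growth (fun t => q1 t + q2 t) (s1 + s2).
Proof.
move=> q1s q2s e e0; have e2 : (0 < e / 2)%R by rewrite divr_gt0.
move: (q1s _ e2) (q2s _ e2); apply: filterS2 => t q1t q2t.
apply: le_trans (leeD q1t q2t) _; rewrite -EFinD lee_fin -mulrDl.
by rewrite ler_wpM2r ?sqr_ge0 //; lra.
Qed.

Lemma quad_growthZ q s (a : R) :
  (0 < a)%R -> quad_growth q s -> quad_growth (fun t => a%:E * q t) (a * s).
Proof.
move=> a0 qs e e0; have ea : (0 < e / a)%R by rewrite divr_gt0.
apply: filterS (qs _ ea) => t qt.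
apply: le_trans (lee_wpmul2l _ qt) _; first by rewrite lee_fin ltW.
have -> : (a * s + e = a * (s + e / a))%R by rewrite mulrDr mulrCA divff ?gt_eqF ?mulr1.
by rewrite -EFinM mulrA.
Qed.

Lemma quad_growthZV q s (a : R) :
  (0 < a)%R -> quad_growth (fun t => a%:E * q t) (a * s) -> quad_growth q s.
Proof.
move=> a0; have aV0 : (0 < a^-1)%R by rewrite invr_gt0.
move=> /(quad_growthZ aV0); rewrite mulrA mulVf ?gt_eqF // mul1r.
by apply: quad_growth_le => t; rewrite muleA -EFinM mulVf ?gt_eqF // mul1e.
Qed.

Lemma quad_growth_cst (K : R) : quad_growth (fun _ => K%:E) 0.
Proof.
move=> e e0; move: (nbhs_infty_ger (K / e)) (nbhs_infty_gt 0).
apply: filterS2 => t Kt t0; rewrite lee_fin add0r.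
have t1 : (1 <= t%:R :> R)%R by rewrite ler1n.
have : (K <= t%:R * e)%R by rewrite -ler_pdivrMr.
have : (0 <= e * t%:R)%R by rewrite mulr_ge0 // ltW.
by rewrite expr2; nra.
Qed.

Lemma quad_growth_approx (q q' : nat -> \bar R) s : (0 <= s)%R ->
  (forall d : R, (0 < d)%R -> exists K : R, forall t, q t <= (1 + d)%:E * q' t + K%:E) ->
  quad_growth q' s -> quad_growth q s.
Proof.
move=> s0 qq' q's; apply: quad_growth_lim => e e0.
pose d := (e / (s + 1))%R.
have s1 : (0 < s + 1)%R by rewrite ltr_wpDl.
have d0 : (0 < d)%R by rewrite divr_gt0.
have [K qK] := qq' d d0.
apply: quad_growth_le qK _; apply: (@quad_growthW _ ((1 + d) * s + 0)%R).
  have de : (d * (s + 1) = e)%R by rewrite /d mulfVK // gt_eqF.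
  nra.
by apply: quad_growthD (quad_growth_cst K); apply: quad_growthZ => //; lra.
Qed.

End quadratic_growth.

Section velocity.
Variable R : realType.
Local Notation C := R[i].
Local Notation state := (state R).
Local Open Scope ereal_scope.

Lemma vel_at_ge0 (W : state -> state) (psi : state) : 0 <= vel_at W psi.
Proof.
apply: limf_esup_ge0; first exact: filter_not_empty.
by move=> t; rewrite mule_ge0 ?lee_fin ?invr_ge0 //; case: (normQ2 _) => /=.
Qed.

Lemma normalized_domQ : exists psi : state, in_domQ psi /\ norm2 psi = 1.
Proof.
pose psi : state := fun k => if k == 0%R then (\col_i (i == 0%R)%:R)%R else 0%R.
have psi_off k : k <> 0%R -> vsq (psi k) = 0%R by rewrite /psi => /eqP/negbTE ->; rewrite vsq0.
have psi0 : vsq (psi 0%R) = 1%R by rewrite /psi /vsq !mxE /csq /= expr1n expr0n /= !addr0.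
have norm_psi : norm2 psi = 1.
  rewrite /norm2 (esumT_set1 _ (x := 0%R)) ?psi0 // => [k|k /psi_off ->//].
  by rewrite lee_fin vsq_ge0.
exists psi; split => //; split; first by rewrite norm_psi ltry.
rewrite /normQ2 (esumT_set1 _ (x := 0%R)) ?ltry // => [k|k /psi_off ->].
  by rewrite lee_fin mulr_ge0 ?sqr_ge0 ?vsq_ge0.
by rewrite mulr0.
Qed.

Lemma vel_ge0 (W : state -> state) : 0 <= vel W.
Proof.
have [psi psi_normalized] := normalized_domQ.
by apply: le_trans (vel_at_ge0 W psi) _; apply: ereal_sup_ubound; exists psi.
Qed.

Lemma norm2_iter (W : state -> state) t (psi : state) :
  (forall phi, norm2 (W phi) = norm2 phi) -> norm2 (iter t W psi) = norm2 psi.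
Proof. by move=> W_isometric; elim: t => [//|t IH] /=; rewrite W_isometric. Qed.

Lemma vel_at_leP (W : state -> state) (psi : state) (c : R) : (0 <= c)%R ->
  vel_at W psi <= c%:E <-> quad_growth (fun t => normQ2 (iter t W psi)) (c ^+ 2).
Proof. by move=> c0; apply: limn_esup_esqrt_leP => // t; apply: moment2_ge0. Qed.

Variable W : state -> state.
Hypothesis W_linear : forall (a : C) (psi : state), W (a *: psi) = a *: W psi.

Lemma iterZ t (a : C) (psi : state) : iter t W (a *: psi) = a *: iter t W psi.
Proof. by elim: t => [//|t IH] /=; rewrite IH W_linear. Qed.

Lemma iter0 t : iter t W 0%R = 0%R.
Proof. by have := iterZ t 0%R 0%R; rewrite !scale0r. Qed.

Lemma vel_le_quad_growth (m a : R) (psi : state) :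
  (0 <= m)%R -> vel W <= m%:E -> norm2 psi = a%:E -> normQ2 psi < +oo ->
  quad_growth (fun t => normQ2 (iter t W psi)) (a * m ^+ 2).
Proof.
move=> m0 vel_m psi_a psi_domQ.
have a0 : (0 <= a)%R by rewrite -lee_fin -psi_a norm2_ge0.
have [a_eq0|a_neq0] := eqVneq a 0%R.
  have -> : psi = 0%R by apply: norm2_eq0; rewrite psi_a a_eq0.
  rewrite a_eq0 mul0r.
  by apply: quad_growth_le (quad_growth_cst 0%R) => t; rewrite iter0 normQ2E moment2_0.
pose r := Num.sqrt a.
have r0 : (0 < r)%R by rewrite sqrtr_gt0 lt0r a_neq0.
pose phi := (r^-1)%:C%C *: psi.
have psiE : psi = (r%:C%C *: phi)%R.
  by rewrite scalerA -rmorphM /= mulfV ?gt_eqF // scale1r.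
have phi_normalized : norm2 phi = 1.
  by rewrite norm2Z csq_real psi_a -EFinM exprVn sqr_sqrtr // mulVf.
have phi_domQ : normQ2 phi < +oo.
  rewrite normQ2E moment2Z -normQ2E -(fineK (x := normQ2 psi)) ?ge0_fin_numE //.
    by rewrite -EFinM ltry.
  exact: moment2_ge0.
have /(vel_at_leP _ _ m0) phi_m : vel_at W phi <= m%:E.
  apply: le_trans vel_m; apply: ereal_sup_ubound; exists phi => //.
  by split; [split; rewrite ?phi_normalized ?ltry|].
apply: quad_growth_le (quad_growthZ _ phi_m) => [t|]; last by rewrite lt0r a_neq0.
by rewrite psiE iterZ normQ2E moment2Z csq_real sqr_sqrtr.
Qed.

End velocity.

Lemma sqrD_le (R : realFieldType) (y z d : R) : 0 < d ->
  (y + z) ^+ 2 <= (1 + d) * y ^+ 2 + (1 + d^-1) * z ^+ 2.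
Proof.
move=> d0; have dV0 : 0 <= d^-1 by rewrite invr_ge0 ltW.
have := mulr_ge0 dV0 (sqr_ge0 (d * y - z)).
have -> : d^-1 * (d * y - z) ^+ 2 = d * y ^+ 2 - 2 * y * z + d^-1 * z ^+ 2.
  by field; rewrite gt_eqF.
nra.
Qed.

Lemma add1r_ge0 (R : numFieldType) (d : R) : 0 < d -> 0 <= 1 + d.
Proof. by move=> d0; rewrite addr_ge0 // ltW. Qed.

Lemma add1rV_ge0 (R : numFieldType) (d : R) : 0 < d -> 0 <= 1 + d^-1.
Proof. by move=> d0; rewrite addr_ge0 // invr_ge0 ltW. Qed.

Lemma four_half_sqr (R : numFieldType) (x : R) : 4 * (x / 2) ^+ 2 = x ^+ 2.
Proof. by field. Qed.

Section direct_sum.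
Variable R : realType.
Local Notation C := R[i].
Local Notation state := (state R).
Local Open Scope ereal_scope.
Local Notation evens psi := (fun k : int => psi (2 * k)%R).
Local Notation odds psi := (fun k : int => psi (2 * k + 1)%R).

Definition odd_site (k : int) : R := 2 * k%:~R + 1.

Lemma dsum_even (A B : state -> state) (psi : state) k :
  dsum A B psi (2 * k)%R = A (evens psi) k.
Proof. by rewrite /dsum ifT; [congr (A _ _); lia|apply/eqP; lia]. Qed.

Lemma dsum_odd (A B : state -> state) (psi : state) k :
  dsum A B psi (2 * k + 1)%R = B (odds psi) k.
Proof. by rewrite /dsum ifF; [congr (B _ _); lia|apply/negbTE/eqP; lia]. Qed.

Lemma evens_dsum (A B : state -> state) (psi : state) :
  evens (dsum A B psi) = A (evens psi).
Proof. by apply/funext => k; rewrite dsum_even. Qed.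

Lemma odds_dsum (A B : state -> state) (psi : state) :
  odds (dsum A B psi) = B (odds psi).
Proof. by apply/funext => k; rewrite dsum_odd. Qed.

Lemma iter_dsum (A B : state -> state) t (psi : state) :
  iter t (dsum A B) psi = dsum (iter t A) (iter t B) psi.
Proof.
elim: t => [|t IH] /=; last by rewrite IH {1}/dsum evens_dsum odds_dsum.
by apply/funext => n; rewrite /dsum; case: ifP => /eqP n2; congr (psi _); lia.
Qed.

Lemma norm2_even_odd (psi : state) : norm2 psi = norm2 (evens psi) + norm2 (odds psi).
Proof. by rewrite /norm2 esum_even_odd // => k; rewrite lee_fin vsq_ge0. Qed.

Lemma normQ2_even_odd (psi : state) :
  normQ2 psi = 4%:E * normQ2 (evens psi) + moment2 odd_site (odds psi).
Proof.
rewrite {1}/normQ2 esum_even_odd => [|k]; last by rewrite lee_fin mulr_ge0 ?sqr_ge0 ?vsq_ge0.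
rewrite -moment2_double; congr (_ + _); apply: eq_esum => k _.
  by rewrite intrM.
by rewrite /odd_site intrD intrM.
Qed.

Lemma normQ2_dsum (A B : state -> state) (psi : state) :
  normQ2 (dsum A B psi) = 4%:E * normQ2 (A (evens psi)) + moment2 odd_site (B (odds psi)).
Proof. by rewrite normQ2_even_odd evens_dsum odds_dsum. Qed.

Lemma moment2_odd_le (d : R) (psi : state) : (0 < d)%R ->
  moment2 odd_site psi <= (1 + d)%:E * (4%:E * normQ2 psi) + (1 + d^-1)%:E * norm2 psi.
Proof.
move=> d0; rewrite -moment2_double.
apply: moment2_le => [||k]; [exact: add1r_ge0 d0|exact: add1rV_ge0 d0|].
by have := sqrD_le (2 * k%:~R) 1 d0; rewrite expr1n mulr1.
Qed.

Lemma normQ2_le_moment2_odd (d : R) (psi : state) : (0 < d)%R ->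
  4%:E * normQ2 psi <= (1 + d)%:E * moment2 odd_site psi + (1 + d^-1)%:E * norm2 psi.
Proof.
move=> d0; rewrite -moment2_double.
apply: moment2_le => [||k]; [exact: add1r_ge0 d0|exact: add1rV_ge0 d0|].
by have := sqrD_le (odd_site k) (-1) d0; rewrite /odd_site sqrrN expr1n mulr1 addrK.
Qed.

(* The state [phi] placed on the even, resp. odd, sublattice. *)
Definition inj_even (phi : state) : state := dsum (fun _ => phi) (fun _ => 0%R) 0%R.
Definition inj_odd (phi : state) : state := dsum (fun _ => 0%R) (fun _ => phi) 0%R.

Lemma inj_even_normalized (phi : state) : in_domQ phi -> norm2 phi = 1 ->
  in_domQ (inj_even phi) /\ norm2 (inj_even phi) = 1.
Proof.
move=> [_ phi_domQ] phi1.
have norm_inj : norm2 (inj_even phi) = 1.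
  by rewrite norm2_even_odd /inj_even evens_dsum odds_dsum norm2_0 adde0.
split; [split|] => //; first by rewrite norm_inj ltry.
rewrite normQ2_even_odd /inj_even evens_dsum odds_dsum moment2_0 adde0.
exact: lte_mul_pinfty.
Qed.

Lemma inj_odd_normalized (phi : state) : in_domQ phi -> norm2 phi = 1 ->
  in_domQ (inj_odd phi) /\ norm2 (inj_odd phi) = 1.
Proof.
move=> [phi_fin phi_domQ] phi1.
have norm_inj : norm2 (inj_odd phi) = 1.
  by rewrite norm2_even_odd /inj_odd evens_dsum odds_dsum norm2_0 add0e.
split; [split|] => //; first by rewrite norm_inj ltry.
rewrite normQ2_even_odd /inj_odd evens_dsum odds_dsum [normQ2 0%R]normQ2E moment2_0.
rewrite mule0 add0e; apply: le_lt_trans (moment2_odd_le _ ltr01) _.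
by apply: lte_add_pinfty; apply: lte_mul_pinfty => //; apply: lte_mul_pinfty.
Qed.

Variables W1 W2 : state -> state.
Hypothesis W1_linear : forall (a : C) (psi : state), W1 (a *: psi) = a *: W1 psi.
Hypothesis W2_linear : forall (a : C) (psi : state), W2 (a *: psi) = a *: W2 psi.
(* The even sublattice carries no offset. *)
Hypothesis W2_isometric : forall psi : state, norm2 (W2 psi) = norm2 psi.

Lemma normQ2_iter_dsum_le (d : R) t (psi : state) : (0 < d)%R ->
  normQ2 (iter t (dsum W1 W2) psi) <=
  (1 + d)%:E * (4%:E * (normQ2 (iter t W1 (evens psi)) + normQ2 (iter t W2 (odds psi))))
  + (1 + d^-1)%:E * norm2 (odds psi).
Proof.
move=> d0; rewrite iter_dsum normQ2_dsum -(norm2_iter t _ W2_isometric).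
set q1 := normQ2 _; set q2 := normQ2 _.
have q10 : 0 <= q1 by apply: moment2_ge0.
have q20 : 0 <= q2 by apply: moment2_ge0.
apply: le_trans (leeD (lexx _) (moment2_odd_le _ d0)) _.
rewrite addeA; apply: leeD2r.
rewrite [_ * (q1 + q2)]ge0_muleDr // ge0_muleDr ?mule_ge0 //; apply: leeD2r.
by apply: lee_pemull; rewrite ?mule_ge0 // lee_fin lerDl ltW.
Qed.

Lemma norm2_evens_odds_real (psi : state) : norm2 psi = 1 ->
  exists a b : R, [/\ norm2 (evens psi) = a%:E, norm2 (odds psi) = b%:E & (a + b = 1)%R].
Proof.
rewrite norm2_even_odd; move: (norm2_ge0 (evens psi)) (norm2_ge0 (odds psi)).
case: (norm2 (evens psi)) => [a| |] //; case: (norm2 (odds psi)) => [b| |] //= _ _ [ab].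
by exists a, b.
Qed.

Lemma normQ2_evens_lt (psi : state) : normQ2 psi < +oo -> normQ2 (evens psi) < +oo.
Proof.
move=> psi_domQ; apply: le_lt_trans (lee_mul4 (moment2_ge0 _ _)) _.
by apply: le_lt_trans psi_domQ; rewrite normQ2_even_odd leeDl // moment2_ge0.
Qed.

Lemma normQ2_odds_lt (psi : state) :
  normQ2 psi < +oo -> norm2 (odds psi) < +oo -> normQ2 (odds psi) < +oo.
Proof.
move=> psi_domQ od_fin; apply: le_lt_trans (lee_mul4 (moment2_ge0 _ _)) _.
apply: le_lt_trans (normQ2_le_moment2_odd _ ltr01) _.
apply: lte_add_pinfty; apply: lte_mul_pinfty => //.
by apply: le_lt_trans psi_domQ; rewrite normQ2_even_odd leeDr // mule_ge0 ?moment2_ge0.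
Qed.

Lemma vel_at_dsum_le (m : R) (psi : state) : (0 <= m)%R ->
  vel W1 <= m%:E -> vel W2 <= m%:E -> in_domQ psi -> norm2 psi = 1 ->
  vel_at (dsum W1 W2) psi <= (2 * m)%:E.
Proof.
move=> m0 W1m W2m [_ psi_domQ] /norm2_evens_odds_real[a [b [ev_a od_b ab1]]].
have G1 := vel_le_quad_growth W1_linear m0 W1m ev_a (normQ2_evens_lt psi_domQ).
have od_fin : norm2 (odds psi) < +oo by rewrite od_b ltry.
have G2 := vel_le_quad_growth W2_linear m0 W2m od_b (normQ2_odds_lt psi_domQ od_fin).
apply/vel_at_leP; first by rewrite mulr_ge0.
have -> : ((2 * m) ^+ 2 = 4 * (a * m ^+ 2 + b * m ^+ 2))%R by rewrite -mulrDl ab1; ring.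
apply: quad_growth_approx (quad_growthZ _ (quad_growthD G1 G2)) => //.
  by rewrite mulr_ge0 // -mulrDl ab1 mul1r sqr_ge0.
move=> d d0; exists ((1 + d^-1) * b)%R => t.
by rewrite EFinM -od_b; apply: normQ2_iter_dsum_le.
Qed.

Lemma vel_at_inj_even_le (x : R) (phi : state) : (0 <= x)%R ->
  vel_at (dsum W1 W2) (inj_even phi) <= x%:E -> vel_at W1 phi <= (x / 2)%:E.
Proof.
move=> x0 /(vel_at_leP _ _ x0) G; apply/vel_at_leP; first by rewrite divr_ge0.
apply: (@quad_growthZV _ _ _ 4) => //; rewrite four_half_sqr.
apply: quad_growth_le G => t.
rewrite iter_dsum normQ2_dsum /inj_even evens_dsum odds_dsum /= iter0 //.
by rewrite moment2_0 adde0.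
Qed.

Lemma vel_at_inj_odd_le (x : R) (phi : state) : (0 <= x)%R -> norm2 phi < +oo ->
  vel_at (dsum W1 W2) (inj_odd phi) <= x%:E -> vel_at W2 phi <= (x / 2)%:E.
Proof.
move=> x0 phi_fin /(vel_at_leP _ _ x0) G; apply/vel_at_leP; first by rewrite divr_ge0.
apply: (@quad_growthZV _ _ _ 4) => //; rewrite four_half_sqr.
apply: quad_growth_approx G => [|d d0]; first exact: sqr_ge0.
exists ((1 + d^-1) * fine (norm2 phi))%R => t.
rewrite EFinM fineK ?ge0_fin_numE ?norm2_ge0 // -(norm2_iter t _ W2_isometric).
rewrite iter_dsum normQ2_dsum /inj_odd evens_dsum odds_dsum /= iter0 //.
by rewrite [normQ2 0%R]normQ2E moment2_0 mule0 add0e; apply: normQ2_le_moment2_odd.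
Qed.

Lemma vel_dsum_le (m : R) : (0 <= m)%R ->
  vel W1 <= m%:E -> vel W2 <= m%:E -> vel (dsum W1 W2) <= (2 * m)%:E.
Proof.
move=> m0 W1m W2m; apply: ge_ereal_sup => _ [psi [psi_domQ psi1] <-].
exact: vel_at_dsum_le.
Qed.

Lemma vel_le_dsum (x : R) : (0 <= x)%R -> vel (dsum W1 W2) <= x%:E ->
  vel W1 <= (x / 2)%:E /\ vel W2 <= (x / 2)%:E.
Proof.
move=> x0 dsum_x; split; apply: ge_ereal_sup => _ [phi [phi_domQ phi1] <-].
- apply: vel_at_inj_even_le => //; apply: le_trans dsum_x; apply: ereal_sup_ubound.
  by exists (inj_even phi) => //; apply: inj_even_normalized.
- apply: vel_at_inj_odd_le => //; first by case: phi_domQ.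
  apply: le_trans dsum_x; apply: ereal_sup_ubound.
  by exists (inj_odd phi) => //; apply: inj_odd_normalized.
Qed.

Theorem vel_dsum : vel (dsum W1 W2) = 2%:E * Order.max (vel W1) (vel W2).
Proof. exact: eq_twice_max (vel_ge0 W1) (vel_ge0 _) vel_dsum_le vel_le_dsum. Qed.

End direct_sum.

Theorem lemma3p5 (R : realType) (w1 w2 : seq (qw_gen R)) :
  is_walk w1 -> is_walk w2 ->
  vel (dsum (walk_act w1) (walk_act w2)) =
  (2%:E * Order.max (vel (walk_act w1)) (vel (walk_act w2)))%E.
Proof.
move=> w1_walk w2_walk.
by apply: vel_dsum => [a psi|a psi|psi]; rewrite ?walk_actZ ?norm2_walk_act.
Qed.
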